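(* In a finite dynamic game as described in the context, let $K=(K^i)_{i\in\mathcal{I}}$ be compressed information such that for every player $i$, $K^i$ is unilaterally sufficient information for player $i$. Then the set of payoff profiles $(J^i(\rho))_{i\in\mathcal{I}}$ attained by $K$-based Bayes–Nash equilibria $\rho$ equals the set of payoff profiles $(J^i(g))_{i\in\mathcal{I}}$ attained by all Bayes–Nash equilibria $g$ (in behavioral strategies with perfect recall).
   Context: Game model: finite set of players $\mathcal{I}$, times $\mathcal{T}=\{1,\dots,T\}$. At time $t$ each player $i$ takes action $U_t^i\in\mathcal{U}_t^i$, obtains reward $R_t^i\in[-1,1]$ and learns new information $Z_t^i\in\mathcal{Z}_t^i$. There is a state $X_t\in\mathcal{X}_t$ with $(X_{t+1},Z_t,R_t)=f_t(X_t,U_t,W_t)$ for fixed functions $f_t$. The primitive random variables are $(X_1,H_1)$ (with $H_1=(H_1^i)_i$ initial information, possibly correlated with $X_1$) and $W_1,\dots,W_T$, mutually independent with commonly known distributions. All sets $\mathcal{X}_t,\mathcal{U}_t,\mathcal{Z}_t,\mathcal{W}_t,\mathcal{H}_1$ are finite. Perfect recall: $H_t^i=(H_1^i,Z_{1:t-1}^i)\in\mathcal{H}_t^i$, and $U_t^i$ is a component of $Z_t^i$. Behavioral strategy $g^i=(g_t^i)_t$, $g_t^i:\mathcal{H}_t^i\to\Delta(\mathcal{U}_t^i)$; payoff $J^i(g)=\mathbb{E}^g[\sum_t R_t^i]$. A profile $g$ is a Bayes–Nash equilibrium (BNE) if $J^i(g)\ge J^i(\tilde g^i,g^{-i})$ for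 all $i$ and all behavioral $\tilde g^i$. A realization is admissible under $g$ if it has positive probability under $g$. Compression: $K_1^i=\iota_1^i(H_1^i)$, $K_t^i=\iota_t^i(K_{t-1}^i,Z_{t-1}^i)$ for fixed maps, values in finite $\mathcal{K}_t^i$; $k_t^i$ is the compression of $h_t^i$. A $K^i$-based strategy has $\rho_t^i:\mathcal{K}_t^i\to\Delta(\mathcal{U}_t^i)$; a $K$-based BNE is a BNE (against all full-history deviations) in which every player uses a $K^i$-based strategy. Unilaterally sufficient information (USI): $K^i$ is USI for player $i$ if there exist functions $F_t^{i,g^i}:\mathcal{K}_t^i\to\Delta(\mathcal{H}_t^i)$ depending only on $g^i$ and $\Phi_t^{i,g^{-i}}:\mathcal{K}_t^i\to\Delta(\mathcal{X}_t\times\mathcal{H}_t^{-i})$ depending only on $g^{-i}$ such that $\Pr^g(x_t,h_t\mid k_t^i)=F_t^{i,g^i}(h_t^i\mid k_t^i)\,\Phi_t^{i,g^{-i}}(x_t,h_t^{-i}\mid k_t^i)$ for all behavioral profiles $g$, all $t$ and all $k_t^i$ admissible under $g$ (here $x_t,h_t^i,h_t^{-i}$ range independently over their sets; if they disagree on shared components the left side is $0$). *)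

From HB Require Import structures.
From mathcomp Require Import all_boot all_order all_algebra.
From mathcomp Require Import reals.
Set Implicit Arguments. Unset Strict Implicit. Unset Printing Implicit Defensive.
Import Order.TTheory GRing.Theory Num.Theory.
Local Open Scope ring_scope.

(* Times are 0-based: the paper's time t in {1,...,T} is index t-1 < T here.
   All time-indexed sets are families over nat; only indices < T (and T for
   the state X_{T+1}) matter. *)
Record game (I : finType) (R : realType) := Game {
  horizon : nat;
  Xs : nat -> finType;
  Us : I -> nat -> finType;
  Zs : I -> nat -> finType;
  Ws : nat -> finType;
  H1s : I -> finType;
  P0 : Xs 0 -> {dffun forall i, H1s i} -> R;      (* law of (X_1, H_1) *)
  PW : forall t, Ws t -> R;
  dyn : forall t, Xs t -> {dffun forall i, Us i t} -> Ws t ->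
        (Xs t.+1 * {dffun forall i, Zs i t} * (I -> R))%type;
        (* (X_{t+1}, Z_t, R_t) = f_t(X_t, U_t, W_t) *)
  act_of : forall i t, Zs i t -> Us i t   (* the component of Z_t^i that is U_t^i *)
}.

Arguments horizon {I R} _.
Arguments Xs {I R} _ _.
Arguments Us {I R} _ _ _.
Arguments Zs {I R} _ _ _.
Arguments Ws {I R} _ _.
Arguments H1s {I R} _ _.
Arguments P0 {I R} _ _ _.
Arguments PW {I R} _ t _.
Arguments dyn {I R} _ t _ _ _.
Arguments act_of {I R} _ i t _.

Section Game.
Variables (I : finType) (R : realType) (G : game I R).

Let T := horizon G.

Definition wf_game : Prop :=
  [/\ (forall x h, 0 <= P0 G x h),
      \sum_(x : Xs G 0) \sum_(h : {dffun forall i, H1s G i}) P0 G x h = 1,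
      (forall t, (t < T)%N -> (forall w, 0 <= PW G t w) /\ \sum_(w : Ws G t) PW G t w = 1),
      (forall t, (t < T)%N -> forall x u w i,
          -1 <= (dyn G t x u w).2 i <= 1) &
      (forall t, (t < T)%N -> forall x u w i,
          act_of G i t ((dyn G t x u w).1.2 i) = u i)].

Fixpoint Hist (i : I) (t : nat) : finType :=
  match t with
  | 0 => H1s G i
  | t'.+1 => Finite.clone (Hist i t' * Zs G i t')%type _
  end.

Definition jhist (t : nat) := {dffun forall i, Hist i t}.

Definition strat (i : I) := forall t : nat, Hist i t -> Us G i t -> R.

Definition valid_strat (i : I) (s : strat i) : Prop :=
  forall t, (t < T)%N -> forall h : Hist i t,
    (forall u, 0 <= s t h u) /\ \sum_(u : Us G i t) s t h u = 1.

Definition profile := forall i, strat i.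

Definition valid_profile (g : profile) : Prop := forall i, valid_strat (g i).

Definition act_prob (g : profile) t (h : jhist t) (u : {dffun forall i, Us G i t}) : R :=
  \prod_(i : I) g i t (h i) (u i).

Fixpoint mu (g : profile) (t : nat) : Xs G t -> jhist t -> R :=
  match t return Xs G t -> jhist t -> R with
  | 0 => fun x h => P0 G x h
  | t'.+1 => fun x' h' =>
      let hp : jhist t' := finfun (fun i => (h' i).1) in
      \sum_(x : Xs G t') \sum_(u : {dffun forall i, Us G i t'}) \sum_(w : Ws G t')
        mu g x hp * act_prob g hp u * PW G t' w *
        ((((dyn G t' x u w).1.1 == x') &&
          [forall i, (dyn G t' x u w).1.2 i == (h' i).2]) : nat)%:R
  end.

Definition payoff (g : profile) (i : I) : R :=
  \sum_(t < T) \sum_(x : Xs G t) \sum_(h : jhist t) mu g x h *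
     \sum_(u : {dffun forall j, Us G j t}) act_prob g h u *
        \sum_(w : Ws G t) PW G t w * (dyn G t x u w).2 i.

Definition deviate (g : profile) (i : I) (s : strat i) : profile :=
  fun j => match i =P j with
           | ReflectT e => eq_rect i strat s j e
           | ReflectF _ => g j
           end.

Definition BNE (g : profile) : Prop :=
  valid_profile g /\
  forall i (s : strat i), valid_strat s -> payoff (deviate g s) i <= payoff g i.

Record compression := Compression {
  Ks : I -> nat -> finType;
  iota1 : forall i, H1s G i -> Ks i 0;
  iotaS : forall i t, Ks i t -> Zs G i t -> Ks i t.+1
}.

Variable C : compression.

Fixpoint compress (i : I) (t : nat) : Hist i t -> Ks C i t :=
  match t return Hist i t -> Ks C i t with
  | 0 => fun h => @iota1 C i h
  | t'.+1 => fun h => @iotaS C i t' (@compress i t' h.1) h.2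
  end.

Definition K_based (i : I) (s : strat i) : Prop :=
  exists rho : forall t, Ks C i t -> Us G i t -> R,
    forall t, (t < T)%N -> forall h : Hist i t, s t h = rho t (compress h).

Definition K_BNE (g : profile) : Prop := BNE g /\ forall i, K_based (g i).

Definition probK (g : profile) (i : I) t (k : Ks C i t) : R :=
  \sum_(x : Xs G t) \sum_(h : jhist t) mu g x h * ((compress (h i) == k) : nat)%:R.

Definition condK (g : profile) (i : I) t (k : Ks C i t) x (h : jhist t) : R :=
  mu g x h * ((compress (h i) == k) : nat)%:R / probK g k.

Definition others (i : I) := {j : I | j != i}.

Definition USI (i : I) : Prop :=
  exists (F : strat i -> forall t, Ks C i t -> Hist i t -> R)
         (Phi : (forall j : others i, strat (val j)) ->
                forall t, Ks C i t -> Xs G t ->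
                {dffun forall j : others i, Hist (val j) t} -> R),
    forall g : profile, valid_profile g ->
    forall t, (t < T)%N -> forall k : Ks C i t, 0 < probK g k ->
    forall (x : Xs G t) (h : jhist t),
      condK g k x h =
        F (g i) t k (h i) *
        Phi (fun j => g (val j)) t k x (finfun (fun j : others i => h (val j))).

End Game.

From HB Require Import structures.
From mathcomp Require Import all_boot all_order all_algebra.
From mathcomp Require Import reals boolp ring.
Set Implicit Arguments. Unset Strict Implicit. Unset Printing Implicit Defensive.
Import Order.TTheory GRing.Theory Num.Theory.
Local Open Scope ring_scope.

(* Let F be player i's USI factor and replace g^i by the K^i-based strategy
   that plays, at k, the F(g^i)-weighted average of g^i over the histories
   compressing to k.  Given K_t^i = k, USI makes H_t^i independent of
   (X_t, H_t^-i) with law proportional to F(g^i), so the replacement leaves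
   the expectation of every function of (X_t, H_t^-i, K_t^i) unchanged; by
   induction on t this covers the stage rewards, hence all payoffs.  The
   average depends on g^i alone, so averaging all players of a BNE g yields a
   K-based profile with the same payoffs, against which a deviation of player
   i earns what it earns against g. *)

Section DffunSet.
Variables (I : finType) (T : I -> finType).
Local Notation dfun := {dffun forall j, T j}.
Implicit Types f : dfun.

Definition dffun_set f i (b : T i) : dfun :=
  finfun (fun j => match i =P j with
                   | ReflectT e => eq_rect i T b j e
                   | ReflectF _ => f j
                   end).

Lemma dffun_set_same f i (b : T i) : dffun_set f b i = b.
Proof. by rewrite ffunE; case: eqP => // e; rewrite (eq_irrelevance e erefl). Qed.

Lemma dffun_set_other f i (b : T i) j : j != i -> dffun_set f b j = f j.
Proof. by move=> ji; rewrite ffunE; case: eqP => // e; rewrite e eqxx in ji. Qed.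

Lemma dffun_setK f i (b : T i) : dffun_set (dffun_set f b) (f i) = f.
Proof.
apply/ffunP => j; have [->|ji] := eqVneq j i; first by rewrite dffun_set_same.
by rewrite !dffun_set_other.
Qed.

Lemma exchange_dffun_set (V : nmodType) i (W : dfun -> T i -> V) :
  \sum_(f : dfun) \sum_(b : T i) W f b =
  \sum_(f : dfun) \sum_(b : T i) W (dffun_set f b) (f i).
Proof.
rewrite !pair_bigA.
pose s (p : dfun * T i) := (dffun_set p.1 p.2, p.1 i).
have sK : involutive s by case=> f b; rewrite /s /= dffun_set_same dffun_setK.
by rewrite (reindex_inj (inv_inj sK)).
Qed.

(* Conditional independence in disguise: under the weight [w (f i)], [c (f i)]
   may be replaced by its [w]-average. *)
Lemma sum_dffun_set_avg (R : comPzRingType) i (w c : T i -> R)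
    (A : dfun -> R) :
  (forall f b, w b != 0 -> w (f i) != 0 -> A (dffun_set f b) = A f) ->
  (\sum_b w b) * \sum_(f : dfun) w (f i) * c (f i) * A f =
  (\sum_b w b * c b) * \sum_(f : dfun) w (f i) * A f.
Proof.
move=> A_set; rewrite !mulr_sumr.
under eq_bigr => f _ do rewrite mulr_suml.
under [RHS]eq_bigr => f _ do rewrite mulr_suml.
rewrite exchange_dffun_set; apply: eq_bigr => f _; apply: eq_bigr => b _.
rewrite dffun_set_same.
have [->|wb] := eqVneq (w b) 0; first by rewrite !(mulr0, mul0r).
have [->|wf] := eqVneq (w (f i)) 0; first by rewrite !(mulr0, mul0r).
by rewrite A_set //; ring.
Qed.

End DffunSet.

Lemma weights_normalize (R : realFieldType) (A : finType) (w : A -> R) (p : R)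
    (a0 : A) :
  (forall a, 0 <= w a * p) -> w a0 * p != 0 ->
  \sum_a w a != 0 /\ forall a, 0 <= w a / \sum_a w a.
Proof.
move=> wp_ge0 wp0_neq0.
have Sp_gt0 : 0 < (\sum_a w a) * p.
  rewrite mulr_suml (bigD1 a0) //= ltr_wpDr ?sumr_ge0 // lt0r wp0_neq0.
  exact: wp_ge0.
have S_neq0 : \sum_a w a != 0 by apply: contraTneq Sp_gt0 => ->; rewrite mul0r ltxx.
have p_neq0 : p != 0 by apply: contraTneq Sp_gt0 => ->; rewrite mulr0 ltxx.
split=> // a.
have -> : w a / \sum_a w a = (w a * p) / ((\sum_a w a) * p).
  by rewrite invfM mulrACA divff // mulr1.
by rewrite divr_ge0 // ltW.
Qed.

Lemma sum_pushforward (R : pzSemiRingType) (Y A B : finType) (E : Y -> R)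
    (a : Y -> A) (b : Y -> B) (phi : A -> B -> R) :
  \sum_b' \sum_a' (\sum_y E y * ((a y == a') && (b y == b'))%:R) * phi a' b' =
  \sum_y E y * phi (a y) (b y).
Proof.
under eq_bigr => b' _ do under eq_bigr => a' _ do rewrite mulr_suml.
under eq_bigr => b' _ do rewrite exchange_big.
rewrite exchange_big; apply: eq_bigr => y _.
rewrite (bigD1 (b y)) // (bigD1 (a y)) //= !eqxx andbT mulr1.
rewrite [X in _ + X + _]big1 => [|a' a'_neq]; last first.
  by rewrite eq_sym (negbTE a'_neq) mulr0 mul0r.
rewrite big1 => [|b' b'_neq]; first by rewrite !addr0.
apply: big1 => a' _.
by rewrite [b y == _]eq_sym (negbTE b'_neq) andbF mulr0 mul0r.
Qed.

Section Expectation.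
Variables (I : finType) (R : realType) (G : game I R).
Local Notation T := (horizon G).
Implicit Types (g : profile G) (t : nat).

Definition expect g t (phi : Xs G t -> jhist G t -> R) : R :=
  \sum_x \sum_(h : jhist G t) mu g x h * phi x h.

Lemma deviate_same g i (s : strat G i) : @deviate _ _ G g i s i = s.
Proof. by rewrite /deviate; case: eqP => // e; rewrite (eq_irrelevance e erefl). Qed.

Lemma deviate_other g i (s : strat G i) j : j != i -> @deviate _ _ G g i s j = g j.
Proof. by move=> ji; rewrite /deviate; case: eqP => // e; rewrite e eqxx in ji. Qed.

Lemma valid_deviate g i (s : strat G i) :
  valid_profile g -> valid_strat s -> valid_profile (deviate g s).
Proof.
move=> vg vs j; have [->|ji] := eqVneq j i; first by rewrite deviate_same.
by rewrite deviate_other.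
Qed.

Lemma eq_expect g t (phi psi : Xs G t -> jhist G t -> R) :
  (forall x h, phi x h = psi x h) -> expect g phi = expect g psi.
Proof. by move=> eq_phi; apply: eq_bigr => x _; apply: eq_bigr => h _; rewrite eq_phi. Qed.

Lemma expect_sum g t (U : finType) (F : Xs G t -> jhist G t -> U -> R) :
  expect g (fun x h => \sum_u F x h u) = \sum_u expect g (fun x h => F x h u).
Proof.
rewrite /expect; under eq_bigr => x _ do under eq_bigr => h _ do rewrite mulr_sumr.
by under eq_bigr => x _ do rewrite exchange_big; rewrite exchange_big.
Qed.

Lemma act_prob_split g i t (h : jhist G t) u :
  act_prob g h u = g i t (h i) (u i) * \prod_(j | j != i) g j t (h j) (u j).
Proof. by rewrite /act_prob (bigD1 i). Qed.

Lemma act_prob_deviate g i (s : strat G i) t (h : jhist G t) u :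
  act_prob (deviate g s) h u = s t (h i) (u i) * \prod_(j | j != i) g j t (h j) (u j).
Proof.
rewrite /act_prob (bigD1 i) //= deviate_same; congr (_ * _).
by apply: eq_bigr => j ji; rewrite deviate_other.
Qed.

Lemma mu_ge0 g : wf_game G -> valid_profile g ->
  forall t, (t <= T)%N -> forall x (h : jhist G t), 0 <= mu g x h.
Proof.
case=> P0_ge0 _ PW_law _ _ vg; elim=> [|t IHt] tT x h /=; first exact: P0_ge0.
do 3!(apply: sumr_ge0 => ? _).
rewrite !mulr_ge0 ?ler0n ?(PW_law t tT).1 ?IHt 1?ltnW //.
by apply: prodr_ge0 => j _; apply: (vg j t tT _).1.
Qed.

Definition jhist_cons t (h : jhist G t) (z : {dffun forall j, Zs G j t}) :
  jhist G t.+1 :=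
  finfun (fun j => ((h j, z j) : Hist G j t.+1)).

Lemma sum_jhistS (V : nmodType) t (F : jhist G t.+1 -> V) :
  \sum_h F h = \sum_(h : jhist G t) \sum_z F (jhist_cons h z).
Proof.
rewrite pair_bigA (reindex (fun p => jhist_cons p.1 p.2)) //=.
exists (fun h : jhist G t.+1 => (finfun (fun j => (h j).1), finfun (fun j => (h j).2))).
  by case=> h z _; congr (_, _); apply/ffunP => j; rewrite !ffunE.
by move=> h _; apply/ffunP => j; rewrite !ffunE; case: (h j).
Qed.

Lemma mu_cons g t x' (h : jhist G t) z :
  mu g x' (jhist_cons h z) =
  \sum_(y : Xs G t * ({dffun forall j, Us G j t} * Ws G t))
    mu g y.1 h * act_prob g h y.2.1 * PW G t y.2.2 *
    (((dyn G t y.1 y.2.1 y.2.2).1.1 == x') &&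
     ((dyn G t y.1 y.2.1 y.2.2).1.2 == z))%:R.
Proof.
have prev_cons : finfun (fun j => (jhist_cons h z j).1) = h.
  by apply/ffunP => j; rewrite !ffunE.
rewrite /= prev_cons; under eq_bigr => x _ do rewrite pair_bigA.
rewrite pair_bigA; apply: eq_bigr => -[x [u w]] _ /=; congr (_ * (_ && _)%:R).
apply/forallP/eqP => [z_eq|-> j]; last by rewrite ffunE.
by apply/ffunP => j; rewrite (eqP (z_eq j)) ffunE.
Qed.

Lemma expectS g t (phi : Xs G t.+1 -> jhist G t.+1 -> R) :
  expect g phi =
  expect g (fun x h => \sum_u act_prob g h u * \sum_w PW G t w *
               phi (dyn G t x u w).1.1 (jhist_cons h (dyn G t x u w).1.2)).
Proof.
rewrite /expect exchange_big sum_jhistS.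
under [LHS]eq_bigr => h _ do
  under eq_bigr => z _ do under eq_bigr => x' _ do rewrite mu_cons.
under [RHS]eq_bigr => x _ do under eq_bigr => h _ do
  (rewrite mulr_sumr; under eq_bigr => u _ do rewrite !mulr_sumr; rewrite pair_bigA).
rewrite [RHS]exchange_big; apply: eq_bigr => h _.
rewrite sum_pushforward pair_bigA; apply: eq_bigr => -[x [u w]] _ /=.
by rewrite !mulrA.
Qed.

End Expectation.

Section KiAverage.
Variables (I : finType) (R : realType) (G : game I R) (C : compression G).
Hypothesis wfG : wf_game G.
Variable i : I.
Local Notation T := (horizon G).
Implicit Types (g : profile G) (t : nat).

Definition Ki_measurable t (phi : Xs G t -> jhist G t -> R) : Prop :=
  forall x (h h' : jhist G t), (forall j, j != i -> h j = h' j) ->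
    compress C (h i) = compress C (h' i) -> phi x h = phi x h'.

Lemma expect_split_Ki g t (phi : Xs G t -> jhist G t -> R) :
  expect g phi =
  \sum_(k : Ks C i t) expect g (fun x h => (compress C (h i) == k)%:R * phi x h).
Proof.
rewrite -expect_sum /expect; apply: eq_bigr => x _; apply: eq_bigr => h _.
congr (_ * _); rewrite (bigD1 (compress C (h i))) //= eqxx mul1r.
rewrite big1 ?addr0 // => k k_neq.
by rewrite eq_sym (negbTE k_neq) mul0r.
Qed.

Lemma probK_ge0 g t (k : Ks C i t) :
  valid_profile g -> (t <= T)%N -> 0 <= probK g k.
Proof.
by move=> vg tT; do 2!(apply: sumr_ge0 => ? _); rewrite mulr_ge0 ?ler0n ?mu_ge0.
Qed.

Lemma mu_Ki_eq0 g t (k : Ks C i t) : valid_profile g -> (t <= T)%N ->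
  probK g k = 0 -> forall x (h : jhist G t), mu g x h * (compress C (h i) == k)%:R = 0.
Proof.
move=> vg tT pk0 x h.
have mu_k_ge0 x' (h' : jhist G t) : 0 <= mu g x' h' * (compress C (h' i) == k)%:R.
  by rewrite mulr_ge0 ?ler0n ?mu_ge0.
have sum_x_eq0 := psumr_eq0P (fun x' _ => sumr_ge0 _ (fun h' _ => mu_k_ge0 x' h')) pk0.
by apply: (psumr_eq0P _ (sum_x_eq0 x isT)) => // h' _.
Qed.

Variable F : strat G i -> forall t, Ks C i t -> Hist G i t -> R.
Variable Phi : (forall j : others i, strat G (val j)) ->
  forall t, Ks C i t -> Xs G t -> {dffun forall j : others i, Hist G (val j) t} -> R.
Hypothesis F_Phi_factor : forall g, valid_profile g ->
  forall t, (t < T)%N -> forall k : Ks C i t, 0 < probK g k ->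
  forall (x : Xs G t) (h : jhist G t),
    condK g k x h =
      F (g i) k (h i) *
      Phi (fun j => g (val j)) k x (finfun (fun j : others i => h (val j))).

Definition weightF (s : strat G i) t (k : Ks C i t) (b : Hist G i t) : R :=
  F s k b * (compress C b == k)%:R.

Definition weightF_normal (s : strat G i) t (k : Ks C i t) : bool :=
  (\sum_b weightF s k b != 0) && [forall b, 0 <= weightF s k b / \sum_b' weightF s k b'].

(* USI constrains [F] only where [probK g k > 0]; elsewhere its weights may
   not form a distribution, and any history compressing to [k] is used. *)
Definition avgK (s : strat G i) t (k : Ks C i t) (a : Us G i t) : R :=
  if weightF_normal s k then \sum_b weightF s k b / (\sum_b' weightF s k b') * s t b a
  else if [pick b | compress C b == k] is Some b then s t b a else 0.

Definition Ki_average (s : strat G i) : strat G i := fun t h => avgK s (compress C h).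

Definition Ki_averaged g : profile G := deviate g (Ki_average (g i)).

Lemma weightF_neq0 s t (k : Ks C i t) b : weightF s k b != 0 -> compress C b = k.
Proof. by rewrite /weightF; case: (compress C b =P k) => // _; rewrite mulr0 eqxx. Qed.

Lemma avgK_normal s t (k : Ks C i t) a : weightF_normal s k ->
  (\sum_b weightF s k b) * avgK s k a = \sum_b weightF s k b * s t b a.
Proof.
move=> normal; rewrite /avgK normal mulr_sumr; apply: eq_bigr => b _.
by rewrite mulrA mulrCA divff ?mulr1 //; case/andP: normal.
Qed.

Lemma valid_Ki_average s : valid_strat s -> valid_strat (Ki_average s).
Proof.
move=> vs t tT h; rewrite /Ki_average /avgK.
case: (boolP (weightF_normal s _)) => [/andP[S_neq0 /forallP w_ge0]|_] /=; last first.
  by case: pickP => [b _|no_b]; [exact: vs | have := no_b h; rewrite /= eqxx].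
split=> [u|]; first by apply: sumr_ge0 => b _; rewrite mulr_ge0 ?(vs t tT b).1.
rewrite exchange_big /=.
under eq_bigr => b _ do rewrite -mulr_sumr (vs t tT b).2 mulr1.
by rewrite -mulr_suml divff.
Qed.

Lemma valid_Ki_averaged g : valid_profile g -> valid_profile (Ki_averaged g).
Proof. by move=> vg; apply: valid_deviate => //; apply: valid_Ki_average. Qed.

Definition PhiOf g t (k : Ks C i t) x (h : jhist G t) : R :=
  Phi (fun j => g (val j)) k x (finfun (fun j : others i => h (val j))).

Lemma PhiOf_set g t (k : Ks C i t) x (h : jhist G t) (b : Hist G i t) :
  PhiOf g k x (dffun_set h b) = PhiOf g k x h.
Proof.
rewrite /PhiOf; congr (Phi _ _ _ _); apply/ffunP => j.
by rewrite [LHS]ffunE [RHS]ffunE dffun_set_other // (valP j).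
Qed.

Lemma mu_Ki_factor g t (k : Ks C i t) :
  valid_profile g -> (t < T)%N -> 0 < probK g k -> forall x (h : jhist G t),
  mu g x h * (compress C (h i) == k)%:R =
  probK g k * (weightF (g i) k (h i) * PhiOf g k x h).
Proof.
move=> vg tT pk_gt0 x h; have := F_Phi_factor vg tT pk_gt0 x h.
rewrite /condK /weightF /PhiOf; case: eqP => _; last by rewrite !(mulr0, mul0r).
by rewrite !mulr1 => <-; rewrite mulrC divfK ?gt_eqF.
Qed.

Lemma weightF_normal_pos g t (k : Ks C i t) : valid_profile g -> (t < T)%N ->
  0 < probK g k -> weightF_normal (g i) k.
Proof.
move=> vg tT pk_gt0.
have [[x0 h0] /= wPhi0] : exists p : Xs G t * jhist G t,
    weightF (g i) k (p.2 i) * PhiOf g k p.1 p.2 != 0.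
  apply/existsP; apply: contraTT (oner_neq0 R) => /existsPn wPhi_eq0.
  have : probK g k * 1 = probK g k * 0.
    rewrite mulr1 {1}/probK pair_bigA big1 ?mulr0 // => -[x h] _.
    by rewrite mu_Ki_factor //= (eqP (negbNE (wPhi_eq0 (x, h)))) mulr0.
  by move/(mulfI (lt0r_neq0 pk_gt0))/eqP; rewrite oner_eq0.
(* Replacing [h0 i] by [b] in the factorisation: all weights have the sign
   of [PhiOf g k x0 h0]. *)
have wPhi_ge0 b : 0 <= weightF (g i) k b * PhiOf g k x0 h0.
  have := mu_Ki_factor vg tT pk_gt0 x0 (dffun_set h0 b).
  rewrite dffun_set_same PhiOf_set => muE.
  by rewrite -(pmulr_rge0 _ pk_gt0) -muE mulr_ge0 ?ler0n ?mu_ge0 // ltnW.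
have [S_neq0 w_ge0] := weights_normalize wPhi_ge0 wPhi0.
by rewrite /weightF_normal S_neq0; apply/forallP.
Qed.

Lemma expect_Ki_factor g t (k : Ks C i t) (c : Hist G i t -> R)
    (theta : Xs G t -> jhist G t -> R) :
  valid_profile g -> (t < T)%N -> 0 < probK g k ->
  expect g (fun x h => (compress C (h i) == k)%:R * (c (h i) * theta x h)) =
  probK g k * \sum_(h : jhist G t)
    weightF (g i) k (h i) * c (h i) * \sum_x PhiOf g k x h * theta x h.
Proof.
move=> vg tT pk_gt0; rewrite /expect exchange_big mulr_sumr; apply: eq_bigr => h _.
rewrite !mulr_sumr; apply: eq_bigr => x _.
by rewrite mulrA mu_Ki_factor //; ring.
Qed.

Lemma expect_Ki_average g t (theta : Xs G t -> jhist G t -> R) (a : Us G i t) :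
  valid_profile g -> (t < T)%N -> Ki_measurable theta ->
  expect g (fun x h => g i t (h i) a * theta x h) =
  expect g (fun x h => Ki_average (g i) (h i) a * theta x h).
Proof.
move=> vg tT theta_meas; rewrite !(expect_split_Ki g); apply: eq_bigr => k _.
have avgE x (h : jhist G t) :
    (compress C (h i) == k)%:R * (Ki_average (g i) (h i) a * theta x h) =
    (compress C (h i) == k)%:R * (avgK (g i) k a * theta x h).
  by rewrite /Ki_average; case: eqP => [->|]; rewrite ?mul0r.
rewrite [RHS](eq_expect _ avgE).
have [pk0|pk_gt0] : probK g k = 0 \/ 0 < probK g k.
  have := probK_ge0 k vg (ltnW tT); rewrite le0r => /orP[/eqP|]; by [left|right].
  by rewrite /expect !big1 // => x _; apply: big1 => h _;
    rewrite mulrA mu_Ki_eq0 ?mul0r // ltnW.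
rewrite (expect_Ki_factor (fun _ => avgK (g i) k a)) //.
rewrite (expect_Ki_factor (fun b => g i t b a)) //; congr (_ * _).
have /andP[S_neq0 _] := weightF_normal_pos vg tT pk_gt0.
pose A h := \sum_x PhiOf g k x h * theta x h.
apply: (mulfI S_neq0).
rewrite (sum_dffun_set_avg (w := weightF (g i) k) (fun b => g i t b a) (A := A))
  => [|h b wb wh].
  rewrite -avgK_normal ?weightF_normal_pos // -mulrA mulr_sumr; congr (_ * _).
  by apply: eq_bigr => h _; rewrite /A; ring.
rewrite /=; apply: eq_bigr => x _; rewrite PhiOf_set (theta_meas x _ h) //.
  by move=> j ji; rewrite dffun_set_other.
by rewrite dffun_set_same (weightF_neq0 wb) (weightF_neq0 wh).
Qed.

Lemma expect_act_Ki_averaged g t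
    (omega : Xs G t -> jhist G t -> {dffun forall j, Us G j t} -> R) :
  valid_profile g -> (t < T)%N ->
  (forall phi : Xs G t -> jhist G t -> R,
     Ki_measurable phi -> expect g phi = expect (Ki_averaged g) phi) ->
  (forall u, Ki_measurable (fun x h => omega x h u)) ->
  expect g (fun x h => \sum_u act_prob g h u * omega x h u) =
  expect (Ki_averaged g) (fun x h => \sum_u act_prob (Ki_averaged g) h u * omega x h u).
Proof.
move=> vg tT expect_eq omega_meas.
pose others_act (h : jhist G t) (u : {dffun forall j, Us G j t}) :=
  \prod_(j | j != i) g j t (h j) (u j).
have others_act_meas u : Ki_measurable (fun x h => others_act h u * omega x h u).
  move=> x h h' same_other same_K /=; rewrite (omega_meas u x h h') //.
  by congr (_ * _); apply: eq_bigr => j ji; rewrite same_other.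
rewrite -expect_eq => [|x h h' same_other same_K]; last first.
  apply: eq_bigr => u _; rewrite !act_prob_deviate -!mulrA /Ki_average same_K.
  by congr (_ * _); apply: (others_act_meas u x h h').
rewrite !expect_sum; apply: eq_bigr => u _.
under eq_expect => x h do rewrite (act_prob_split _ i) -mulrA.
rewrite expect_Ki_average //; last exact: others_act_meas.
by apply: eq_expect => x h; rewrite act_prob_deviate mulrA.
Qed.

Lemma expect_Ki_averaged g t (phi : Xs G t -> jhist G t -> R) :
  valid_profile g -> (t <= T)%N -> Ki_measurable phi ->
  expect g phi = expect (Ki_averaged g) phi.
Proof.
move=> vg; elim: t phi => [//|t IHt] phi tT phi_meas.
rewrite !expectS; apply: expect_act_Ki_averaged => // [psi|u x h h' same_other same_K].
  by apply: IHt; rewrite ltnW.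
apply: eq_bigr => w _; congr (_ * _); apply: phi_meas => [j ji|]; rewrite !ffunE /=.
  by rewrite same_other.
by rewrite same_K.
Qed.

Lemma payoff_Ki_averaged g j : valid_profile g -> payoff (Ki_averaged g) j = payoff g j.
Proof.
move=> vg; apply: eq_bigr => t _; symmetry.
apply: expect_act_Ki_averaged => // phi phi_meas.
by apply: expect_Ki_averaged => //; apply: ltnW.
Qed.

End KiAverage.

Lemma USI_Ki_average (I : finType) (R : realType) (G : game I R)
    (C : compression G) i :
  wf_game G -> USI C i ->
  exists avg : strat G i -> strat G i,
    (forall s, K_based C (avg s)) /\
    forall g, valid_profile g ->
      valid_profile (deviate g (avg (g i))) /\
      forall j, payoff (deviate g (avg (g i))) j = payoff g j.
Proof.
move=> wfG [F [Phi F_Phi_factor]]; exists (Ki_average F); split.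
  by move=> s; exists (fun t k => avgK F s k).
move=> g vg; split; first exact: valid_Ki_averaged.
by move=> j; apply: (payoff_Ki_averaged wfG F_Phi_factor).
Qed.

Section ReplaceAll.
Variables (I : finType) (R : realType) (G : game I R).
Variable avg : forall i, strat G i -> strat G i.
Hypothesis avg_neutral : forall i (g : profile G), valid_profile g ->
  valid_profile (deviate g (avg (g i))) /\
  forall j, payoff (deviate g (avg (g i))) j = payoff g j.

Definition replace_on (L : seq I) (g : profile G) : profile G :=
  fun j => if j \in L then avg (g j) else g j.
Arguments replace_on L g i : clear implicits.

Lemma replace_on_neutral L (g : profile G) : valid_profile g ->
  valid_profile (replace_on L g) /\ forall j, payoff (replace_on L g) j = payoff g j.
Proof.
elim: L => [|i L IHL] vg.
  by have -> : replace_on [::] g = g by apply: functional_extensionality_dep.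
have [iL|iNL] := boolP (i \in L).
  suff -> : replace_on (i :: L) g = replace_on L g by exact: IHL.
  apply: functional_extensionality_dep => j; rewrite /replace_on inE.
  by have [->|] := eqVneq j i; rewrite ?iL.
have -> : replace_on (i :: L) g = deviate (replace_on L g) (avg (replace_on L g i)).
  apply: functional_extensionality_dep => j; have [->|ji] := eqVneq j i.
    by rewrite deviate_same /replace_on inE eqxx (negbTE iNL).
  by rewrite deviate_other // /replace_on inE (negbTE ji).
have [vL payoffL] := IHL vg; have [vi payoffi] := avg_neutral i vL.
by split=> // j; rewrite payoffi payoffL.
Qed.

Lemma BNE_replace_all (g : profile G) : BNE g -> BNE (replace_on (enum I) g).
Proof.
case=> vg g_best; have [vrho payoff_rho] := replace_on_neutral (enum I) vg.
split=> // i s vs.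
have -> : deviate (replace_on (enum I) g) s =
          replace_on [seq j <- enum I | j != i] (deviate g s).
  apply: functional_extensionality_dep => j; have [->|ji] := eqVneq j i.
    by rewrite deviate_same /replace_on mem_filter eqxx /= deviate_same.
  rewrite deviate_other // /replace_on mem_enum mem_filter /= ji.
  by rewrite mem_enum deviate_other.
have [_ payoff_dev] :=
  replace_on_neutral [seq j <- enum I | j != i] (valid_deviate vg vs).
by rewrite payoff_dev payoff_rho; apply: g_best.
Qed.

End ReplaceAll.

Theorem theorem2 (I : finType) (R : realType) (G : game I R)
    (C : compression G) :
  wf_game G ->
  (forall i : I, USI C i) ->
  forall v : I -> R,
    (exists rho : profile G, K_BNE C rho /\ forall i, payoff rho i = v i) <->
    (exists g : profile G, BNE g /\ forall i, payoff g i = v i).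
Proof.
move=> wfG USI_C v; split=> [[rho [[rhoBNE _] rho_v]]|[g [gBNE g_v]]].
  by exists rho.
pose avg i := sval (cid (USI_Ki_average wfG (USI_C i))).
have avgP i : _ /\ _ := svalP (cid (USI_Ki_average wfG (USI_C i))).
have avg_neutral i := (avgP i).2.
exists (replace_on avg (enum I) g); split; first split.
- exact: BNE_replace_all.
- by move=> i; rewrite /replace_on mem_enum; apply: (avgP i).1.
- have [_ payoff_rho] :=
    @replace_on_neutral _ _ _ avg avg_neutral (enum I) g gBNE.1.
  by move=> i; rewrite payoff_rho.
Qed.
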